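(* In the standing setup, for all $S,T\in\mathfrak{S}$ we have $|\mathcal{N}_{(S,T)}|\le\gcd(\mathrm{eff}(\sigma^+_S),-\mathrm{eff}(\sigma^-_T))$ (whenever $\mathcal{N}_{(S,T)}\neq\emptyset$, so that both cycles are defined).
   Context: $\mathbb{N}=\{0,1,2,\dots\}$. A one-counter system (OCS) $\mathcal{O}$ consists of a finite set $Q$ of states, a set $T_{>0}\subseteq Q\times\{-1,0,1\}\times Q$ of non-zero transitions and a set $T_{=0}\subseteq Q\times\{0,1\}\times Q$ of zero tests. A configuration is a pair $(q,c)\in Q\times\mathbb{N}$ (state $q$, counter value $c$). A transition $t=(p,d,q)$ has source $p$, target $q$, effect $d$; it can be fired in $(p,c)$ if either $t\in T_{>0}$ and $c>0$, or $t\in T_{=0}$ and $c=0$, yielding $(q,c+d)$. A path is a sequence $(\gamma_1,t_1)\cdots(\gamma_m,t_m)$ such that, with some $\gamma_{m+1}$, firing $t_i$ in $\gamma_i$ yields $\gamma_{i+1}$ for all $i\le m$; its source is $\gamma_1$, target $\gamma_{m+1}$, length $\mathrm{len}=m$, configurations appearing on it are $\gamma_1,\dots,\gamma_{m+1}$, intermediate ones are $\gamma_2,\dots,\gamma_m$; its projection is $\mathrm{proj}=t_1\cdots t_m$ and its effect $\mathrm{eff}$ is the sum of the effects of its transitions. A sequence of transitions is consistent if each transition's target is the next one's source. A cycle is a consistent sequence of non-zero transitions starting and ending in the same state (its base state); positive/negative if its effect is positive/negative; simple if no state is visited twice except the base at start and end. The transition multigraph $G$ has vertices $Q$ and an edge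 $p\to q$ labelled $d$ for each $(p,d,q)\in T_{>0}$; $\mathfrak{S}$ is the set of its SCCs and $n_S$ the number of states in $S\in\mathfrak{S}$. A cycle is contained in $S$ if all its states lie in $S$; $S$ is positively (negatively) enabled if it contains a positive (negative) cycle. For every positively enabled $S$ a simple positive cycle $\sigma^+_S$ contained in $S$ is fixed, and for every negatively enabled $T$ a simple negative cycle $\sigma^-_T$ contained in $T$. An arc is a path whose source and target have counter value $0$ and whose intermediate configurations have positive counter value. A path is low if all configurations appearing on it have counter value $<5n$, where $n=|Q|$. For $S,T\in\mathfrak{S}$, an arc $\rho$ is $(S,T)$-normal if $\rho=\rho_{\mathrm{pref}}\rho_{\mathrm{up}}\rho_{\mathrm{cap}}\rho_{\mathrm{down}}\rho_{\mathrm{suff}}$ (normal decomposition) with $\rho_{\mathrm{pref}},\rho_{\mathrm{suff}}$ low, $\mathrm{proj}(\rho_{\mathrm{up}})=(\sigma^+_S)^a$, $\mathrm{proj}(\rho_{\mathrm{down}})=(\sigma^-_T)^b$ for some $a,b\in\mathbb{N}$, the source of $\rho_{\mathrm{cap}}$ having the base state of $\sigma^+_S$ and its target the base state of $\sigma^-_T$. Writing $A=\mathrm{eff}(\sigma^+_S)$, $B=-\mathrm{eff}(\sigma^-_T)$, such a decomposition is good if: (iii) $aA\le 2\,\mathrm{len}(\rho_{\mathrm{cap}})+2\,\mathrm{lcm}(A,B)$; (iv) $bB\le 2\,\mathrm{len}(\rho_{\mathrm{cap}})+2\,\mathrm{lcm}(A,B)$; (v) no infix of $\mathrm{proj}(\rho_{\mathrm{cap}})$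 is a cycle with effect divisible by $\gcd(A,B)$; (vi) the target of $\rho_{\mathrm{up}}$ and the source of $\rho_{\mathrm{down}}$ have counter values $>n$; (vii) all configurations appearing on $\rho_{\mathrm{pref}}$ and $\rho_{\mathrm{suff}}$ together are pairwise distinct. Standing setup: $\alpha,\beta$ are configurations with counter value $0$; $\rho=\rho^1\rho^2\cdots\rho^k$ is a path from $\alpha$ to $\beta$ that has the minimum possible number of appearing configurations with counter value $0$ among all paths from $\alpha$ to $\beta$; each $\rho^i$ is an arc; $\{1,\dots,k\}=\mathcal{L}\sqcup\mathcal{N}$ where for $i\in\mathcal{L}$, $\rho^i$ is a low arc of minimum length among all low arcs with the same source and target, and for $i\in\mathcal{N}$, $\rho^i$ is $(S_i,T_i)$-normal for some $S_i,T_i\in\mathfrak{S}$ with a fixed good normal decomposition $\rho^i=\rho^i_{\mathrm{pref}}\rho^i_{\mathrm{up}}\rho^i_{\mathrm{cap}}\rho^i_{\mathrm{down}}\rho^i_{\mathrm{suff}}$. For $S,T\in\mathfrak{S}$: $\mathcal{N}_{(S,T)}=\{i\in\mathcal{N}: (S_i,T_i)=(S,T)\}$, $\mathcal{N}_{(S,\cdot)}=\{i\in\mathcal{N}:S_i=S\}$, $\mathcal{N}_{(\cdot,T)}=\{i\in\mathcal{N}:T_i=T\}$. *)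

From mathcomp Require Import all_boot all_order all_algebra.
Set Implicit Arguments. Unset Strict Implicit. Unset Printing Implicit Defensive.
Import Order.TTheory GRing.Theory Num.Theory.

Section OCSDefs.
Variable Q : finType.

Definition config := (Q * nat)%type.
Definition trans := (Q * int * Q)%type.
Definition tsrc (t : trans) : Q := t.1.1.
Definition teff (t : trans) : int := t.1.2.
Definition ttgt (t : trans) : Q := t.2.

(* A one-counter system: non-zero transitions T_{>0} (effects in {-1,0,1})
   and zero tests T_{=0} (effects in {0,1}). *)
Record OCS := {
  Tpos : pred trans;
  Tzero : pred trans;
  Tpos_eff : forall t, Tpos t -> (teff t == (-1)%R) || (teff t == 0%R) || (teff t == 1%R);
  Tzero_eff : forall t, Tzero t -> (teff t == 0%R) || (teff t == 1%R)
}.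

Variable O : OCS.

Definition can_fire (g : config) (t : trans) : bool :=
  (tsrc t == g.1) && ((Tpos O t && (0 < g.2)%N) || (Tzero O t && (g.2 == 0%N))).
Definition next (g : config) (t : trans) : config :=
  (ttgt t, absz (g.2%:Z + teff t)%R).

(* A path is given by its source configuration and its projection (sequence of
   transitions); the configurations are then determined. *)
Record opath := Opath { psrc : config; ptr : seq trans }.

Fixpoint valid_from (g : config) (ts : seq trans) : bool :=
  if ts is t :: ts' then can_fire g t && valid_from (next g t) ts' else true.
Definition is_path (p : opath) : bool := valid_from (psrc p) (ptr p).
Definition configs (p : opath) : seq config := psrc p :: scanl next (psrc p) (ptr p).
Definition ptgt (p : opath) : config := foldl next (psrc p) (ptr p).
Definition intermediates (p : opath) : seq config :=
  behead (belast (psrc p) (scanl next (psrc p) (ptr p))).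
Definition len (p : opath) : nat := size (ptr p).
Definition eff (ts : seq trans) : int := (\sum_(t <- ts) teff t)%R.

Definition is_arc (p : opath) : bool :=
  [&& is_path p, (0 < len p)%N, (psrc p).2 == 0%N, (ptgt p).2 == 0%N &
      all (fun g : config => (0 < g.2)%N) (intermediates p)].
Definition is_low (p : opath) : bool :=
  all (fun g : config => (g.2 < 5 * #|Q|)%N) (configs p).

Definition consistent (ts : seq trans) : bool := sorted (fun t u => ttgt t == tsrc u) ts.
Definition is_cycle (ts : seq trans) : bool :=
  [&& all (Tpos O) ts, consistent ts &
      if ts is t :: _ then tsrc t == ttgt (last t ts) else false].
Definition cyc_base (ts : seq trans) : option Q := omap tsrc (ohead ts).
Definition simple (ts : seq trans) : bool := uniq (map tsrc ts).
Definition contained_in (S : {set Q}) (ts : seq trans) : bool :=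
  all (fun t => (tsrc t \in S) && (ttgt t \in S)) ts.

Definition edge : rel Q := fun x y =>
  [|| Tpos O (x, (-1)%R, y), Tpos O (x, 0%R, y) | Tpos O (x, 1%R, y)].
Definition is_SCC (S : {set Q}) : Prop :=
  exists x, S = [set y | connect edge x y && connect edge y x].

Definition pos_enabled (S : {set Q}) : Prop :=
  exists ts, [/\ is_cycle ts, contained_in S ts & (0 < eff ts)%R].
Definition neg_enabled (S : {set Q}) : Prop :=
  exists ts, [/\ is_cycle ts, contained_in S ts & (eff ts < 0)%R].

Definition pow_seq (s : seq trans) (a : nat) : seq trans := flatten (nseq a s).

Definition normal_decomp (sp sm : {set Q} -> seq trans) (S T : {set Q})
    (rho pref up cap down suff : opath) (a b : nat) : Prop :=
  [/\ [/\ is_arc rho, pos_enabled S & neg_enabled T],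
      [/\ is_path pref, is_path up, is_path cap, is_path down & is_path suff],
      [/\ psrc pref = psrc rho, psrc up = ptgt pref, psrc cap = ptgt up,
          psrc down = ptgt cap & psrc suff = ptgt down] &
    [/\ ptr rho = ptr pref ++ ptr up ++ ptr cap ++ ptr down ++ ptr suff,
      is_low pref /\ is_low suff,
      ptr up = pow_seq (sp S) a /\ ptr down = pow_seq (sm T) b &
      cyc_base (sp S) = Some (psrc cap).1 /\ cyc_base (sm T) = Some (ptgt cap).1]].

Definition good_decomp (sp sm : {set Q} -> seq trans) (S T : {set Q})
    (pref up cap down suff : opath) (a b : nat) : Prop :=
  let A := absz (eff (sp S)) in
  let B := absz (eff (sm T)) in
  [/\ (a * A <= 2 * len cap + 2 * lcmn A B)%N,
      (b * B <= 2 * len cap + 2 * lcmn A B)%N,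
      (forall ts, infix ts (ptr cap) -> is_cycle ts -> ~~ ((gcdn A B)%:Z %| eff ts)%Z),
      (#|Q| < (ptgt up).2)%N /\ (#|Q| < (psrc down).2)%N &
      uniq (configs pref ++ configs suff)].

Definition low_min_arc (p : opath) : Prop :=
  [/\ is_arc p, is_low p &
      forall p', is_arc p' -> is_low p' -> psrc p' = psrc p -> ptgt p' = ptgt p ->
        (len p <= len p')%N].

Definition zero_count (p : opath) : nat := count (fun g : config => g.2 == 0%N) (configs p).

Definition concat_path (alpha : config) (k : nat) (r : 'I_k -> opath) : opath :=
  Opath alpha (flatten [seq ptr (r i) | i <- enum 'I_k]).

Definition chain (alpha beta : config) (k : nat) (r : 'I_k -> opath) : Prop :=
  [/\ k = 0%N -> alpha = beta,
      forall i : 'I_k, nat_of_ord i = 0%N -> psrc (r i) = alpha,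
      forall i : 'I_k, nat_of_ord i = k.-1 -> ptgt (r i) = beta &
      forall i j : 'I_k, nat_of_ord j = (nat_of_ord i).+1 -> psrc (r j) = ptgt (r i)].

End OCSDefs.

From Pilot Require Import Defs.
From mathcomp Require Import all_boot all_order all_algebra zify.
Set Implicit Arguments. Unset Strict Implicit. Unset Printing Implicit Defensive.
Import Order.TTheory GRing.Theory Num.Theory.

(* If two (S,T)-normal arcs rho^i, rho^j with i < j have pumping heights h_i, h_j that agree
   modulo g = gcd(A,B), then h_i + x A = h_j + y B for some x, y (Bezout).  Follow rho^i up to h_i,
   pump sigma+_S x more times, replay the cap of rho^j lifted by y B (it never visits counter 0,
   so lifting keeps it a path), pump sigma-_T y more times and descend as rho^j does.  This path
   from the source of rho^i to the target of rho^j meets counter 0 at most once, whereas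
   rho^i ... rho^j meets it at least twice; splicing it into rho contradicts the minimality of
   the number of zero configurations.  So the heights of the arcs in N_(S,T) are pairwise
   distinct modulo g. *)

Lemma mod_gcdn_lincomb A B u v : 0 < A -> 0 < B -> u = v %[mod gcdn A B] ->
  exists x y, u + x * A = v + y * B.
Proof.
move=> A_gt0 B_gt0; wlog le_uv : u v A B A_gt0 B_gt0 / u <= v => [sym|] uv.
  have [le_uv|/ltnW le_vu] := leqP u v; first exact: sym.
  have [|y [x vu]] := sym v u B A B_gt0 A_gt0 le_vu; first by rewrite gcdnC.
  by exists x, y.
have /dvdnP[t uv_t] : gcdn A B %| v - u by rewrite -eqn_mod_dvd // uv.
have [c _ /dvdnP[d cd]] := Bezoutl B A_gt0.
exists (t * d), (t * c); rewrite -mulnA -cd mulnDr mulnA; nia.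
Qed.

Section OneCounterPaths.
Variables (Q : finType) (O : OCS Q).
Local Notation step := (@Defs.next Q).

Definition tail_zero_count (p : opath Q) : nat :=
  count (fun c : config Q => c.2 == 0) (scanl step (psrc p) (ptr p)).

Definition pcat (p1 p2 : opath Q) : opath Q := Opath (psrc p1) (ptr p1 ++ ptr p2).

Definition shift (d : nat) (c : config Q) : config Q := (c.1, c.2 + d).

Definition pshift (d : nat) (p : opath Q) : opath Q := Opath (shift d (psrc p)) (ptr p).

Lemma zero_countE p : zero_count p = ((psrc p).2 == 0) + tail_zero_count p.
Proof. by []. Qed.

Lemma valid_from_cat g s1 s2 :
  valid_from O g (s1 ++ s2) = valid_from O g s1 && valid_from O (foldl step g s1) s2.
Proof. by elim: s1 g => [|t s IH] g //=; rewrite IH andbA. Qed.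

Lemma pcatA p1 p2 p3 : pcat (pcat p1 p2) p3 = pcat p1 (pcat p2 p3).
Proof. by rewrite /pcat /= catA. Qed.

Section Concatenation.
Variables p1 p2 : opath Q.
Hypothesis p12 : psrc p2 = ptgt p1.

Lemma is_path_pcat : is_path O (pcat p1 p2) = is_path O p1 && is_path O p2.
Proof. by rewrite /is_path /= valid_from_cat p12. Qed.

Lemma ptgt_pcat : ptgt (pcat p1 p2) = ptgt p2.
Proof. by rewrite /ptgt /= foldl_cat p12. Qed.

Lemma tail_zero_count_pcat :
  tail_zero_count (pcat p1 p2) = tail_zero_count p1 + tail_zero_count p2.
Proof. by rewrite /tail_zero_count /= scanl_cat count_cat p12. Qed.

End Concatenation.

Lemma tail_zero_count_gt0 p :
  ptr p != [::] -> (ptgt p).2 = 0 -> 0 < tail_zero_count p.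
Proof.
rewrite /tail_zero_count /ptgt; case/lastP: (ptr p) => // s t _ tgt0.
by rewrite scanl_rcons -cats1 count_cat /= tgt0 addn1.
Qed.

Lemma count_zero_positive (cs : seq (config Q)) :
  all (fun c : config Q => 0 < c.2) cs -> count (fun c : config Q => c.2 == 0) cs = 0.
Proof.
move/allP=> pos; rewrite (eq_in_count (a2 := pred0)) ?count_pred0 // => c /pos.
by rewrite lt0n => /negbTE.
Qed.

Lemma tail_zero_count_arc p : is_arc O p -> tail_zero_count p = 1.
Proof.
case: p => g s; case/lastP: s => [|s t] /and5P[_ //= _ _ /eqP tgt0 pos].
rewrite /intermediates /= scanl_rcons belast_rcons /= in pos.
rewrite /tail_zero_count /= scanl_rcons -cats1 count_cat count_zero_positive //=.
by rewrite tgt0.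
Qed.

Section ArcSplit.
Variables p1 p2 : opath Q.
Hypotheses (p12 : psrc p2 = ptgt p1) (arc12 : is_arc O (pcat p1 p2)).

Lemma arc_pcat_tail_zero_count_l : (ptgt p1).2 != 0 -> tail_zero_count p1 = 0.
Proof.
move=> tgt1; have := tail_zero_count_arc arc12; rewrite tail_zero_count_pcat //.
suff : 0 < tail_zero_count p2 by lia.
have /eqP : (ptgt (pcat p1 p2)).2 == 0 by case/and5P: arc12.
rewrite ptgt_pcat // => tgt2; apply: (tail_zero_count_gt0 _ tgt2).
apply: contraNneq tgt1 => p2_nil.
by rewrite -p12 -tgt2 /ptgt p2_nil.
Qed.

Lemma arc_pcat_tail_zero_count_r : tail_zero_count p2 <= 1.
Proof. by have := tail_zero_count_arc arc12; rewrite tail_zero_count_pcat //; lia. Qed.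

End ArcSplit.

Lemma can_fire_shift d g t : can_fire O g t -> 0 < g.2 ->
  can_fire O (shift d g) t /\ step (shift d g) t = shift d (step g t).
Proof.
rewrite /can_fire /shift /Defs.next /=.
case/andP=> -> /orP[/andP[pos_t _]|/andP[_ /eqP->]] // g_pos.
rewrite pos_t; split; first lia.
by congr pair; case/orP: (Tpos_eff pos_t) => [/orP[]|] /eqP ->; lia.
Qed.

Lemma pshift_path d p : is_path O p -> 0 < (psrc p).2 -> tail_zero_count p = 0 ->
  [/\ is_path O (pshift d p), ptgt (pshift d p) = shift d (ptgt p)
    & tail_zero_count (pshift d p) = 0].
Proof.
case: p => g s; rewrite /is_path /ptgt /tail_zero_count /pshift /=.
elim: s g => [|t s IH] g //= /andP[fire_t valid_s] g_pos /eqP.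
rewrite addn_eq0 eqb0 -lt0n => /andP[tgt_pos /eqP zeros].
have [fire_t' step_shift] := can_fire_shift d fire_t g_pos.
rewrite fire_t' step_shift.
have [-> -> ->] := IH (step g t) valid_s tgt_pos zeros.
split=> //=; apply/eqP.
by rewrite addn0 eqb0 -lt0n -[X in 0 < X]/((step (shift d g) t).2) step_shift /=; lia.
Qed.

Lemma high_counter_run ts q h :
  all (Tpos O) ts -> consistent ts -> (forall t, ohead ts = Some t -> tsrc t = q) ->
  size ts < h ->
  [/\ is_path O (Opath (q, h) ts),
      ptgt (Opath (q, h) ts) = (last q (map (@ttgt Q) ts), `|(h%:Z + eff ts)%R|)
    & tail_zero_count (Opath (q, h) ts) = 0].
Proof.
rewrite /is_path /ptgt /tail_zero_count /=.
elim: ts q h => [|t ts IH] q h /=; first by rewrite /eff big_nil addr0.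
case/andP=> pos_t pos_ts cons_ts src_t h_big.
have eff_t := Tpos_eff pos_t.
have fire_t : can_fire O (q, h) t.
  by rewrite /can_fire (src_t t) // eqxx pos_t /=; apply/orP; left; lia.
have src_ts u : ohead ts = Some u -> tsrc u = ttgt t.
  by case: ts cons_ts {IH pos_ts h_big} => //= u' ts' /andP[/eqP-> _] [<-].
have h'_big : size ts < `|(h%:Z + teff t)%R| by case/orP: eff_t => [/orP[]|] /eqP->; lia.
have [valid_ts -> zeros_ts] := IH (ttgt t) _ pos_ts (path_sorted cons_ts) src_ts h'_big.
rewrite fire_t valid_ts zeros_ts /Defs.next /eff big_cons /=; split=> //.
  by congr pair; case/orP: eff_t => [/orP[]|] /eqP->; move: (\sum_(u <- ts) teff u)%R => e; lia.
by apply/eqP; rewrite addn0 eqb0 -lt0n; case/orP: eff_t => [/orP[]|] /eqP->; lia.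
Qed.

Lemma size_simple (ts : seq (trans Q)) : simple ts -> size ts <= #|Q|.
Proof. by move=> uniq_src; rewrite -(size_map (@tsrc Q)) -(card_uniqP uniq_src) max_card. Qed.

Lemma cycle_high_run sig q h : is_cycle O sig -> cyc_base sig = Some q -> size sig < h ->
  [/\ is_path O (Opath (q, h) sig), ptgt (Opath (q, h) sig) = (q, `|(h%:Z + eff sig)%R|)
    & tail_zero_count (Opath (q, h) sig) = 0].
Proof.
case/and3P=> pos cons; case: sig pos cons => // t ts pos cons closed [src_t] big.
have [] := high_counter_run pos cons (q := q) _ big; first by move=> u [<-].
by rewrite /= last_map -(eqP closed) src_t.
Qed.

Lemma pump_cycle sig q h x :
  is_cycle O sig -> cyc_base sig = Some q -> simple sig ->
  #|Q| < h -> (#|Q|%:Z < h%:Z + x%:Z * eff sig)%R ->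
  let p := Opath (q, h) (pow_seq sig x) in
  [/\ is_path O p, ptgt p = (q, `|(h%:Z + x%:Z * eff sig)%R|) & tail_zero_count p = 0].
Proof.
move=> cyc base /size_simple small; elim: x h => [|x IH] h h_big hx_big /=.
  by rewrite mul0r addr0.
have [path1 tgt1 zeros1] := cycle_high_run cyc base (leq_ltn_trans small h_big).
set h' := `|(h%:Z + eff sig)%R|.
have h'E : (h'%:Z = h%:Z + eff sig)%R by rewrite /h'; nia.
have [||path2 tgt2 zeros2] := IH h'; try nia.
have link : psrc (Opath (q, h') (pow_seq sig x)) = ptgt (Opath (q, h) sig) by rewrite tgt1.
have -> : Opath (q, h) (pow_seq sig x.+1) = pcat (Opath (q, h) sig) (Opath (q, h') (pow_seq sig x)).
  by [].
rewrite is_path_pcat // ptgt_pcat // tail_zero_count_pcat // path1 path2 tgt2 zeros1 zeros2.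
by split=> //; congr pair; nia.
Qed.

Section NormalArc.
Variables (sp sm : {set Q} -> seq (trans Q)) (S T : {set Q}).
Variables (rho pref up cap down suff : opath Q) (a b : nat).
Hypothesis nd : normal_decomp O sp sm S T rho pref up cap down suff a b.

Lemma normal_decomp_pcat : rho = pcat pref (pcat up (pcat cap (pcat down suff))).
Proof.
case: nd => _ _ [src_pref _ _ _ _] [ptr_rho _ _ _].
by rewrite /pcat /= src_pref -ptr_rho; case: (rho).
Qed.

Lemma normal_arc_ascent : 0 < (ptgt up).2 ->
  [/\ is_path O (pcat pref up), ptgt (pcat pref up) = ptgt up
    & tail_zero_count (pcat pref up) = 0].
Proof.
case: nd => [[arc_rho _ _] [path_pref path_up _ _ _] [_ src_up src_cap _ _] _] up_pos.
rewrite is_path_pcat // ptgt_pcat // path_pref path_up; split=> //.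
apply: (arc_pcat_tail_zero_count_l (p2 := pcat cap (pcat down suff))).
- by rewrite ptgt_pcat.
- by rewrite pcatA -normal_decomp_pcat.
- by rewrite ptgt_pcat // -lt0n.
Qed.

Lemma normal_arc_cap : 0 < (ptgt up).2 -> 0 < (psrc down).2 ->
  [/\ is_path O cap, 0 < (psrc cap).2 & tail_zero_count cap = 0].
Proof.
case: nd => [[arc_rho _ _] [_ _ path_cap _ _] [_ src_up src_cap src_down _] _] up_pos down_pos.
rewrite src_cap; split=> //.
have zeros : tail_zero_count (pcat pref (pcat up cap)) = 0.
  apply: (arc_pcat_tail_zero_count_l (p2 := pcat down suff)).
  - by rewrite !ptgt_pcat.
  - by rewrite !pcatA -normal_decomp_pcat.
  - by rewrite !ptgt_pcat // -src_down -lt0n.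
by move: zeros; rewrite !tail_zero_count_pcat //; lia.
Qed.

Lemma normal_arc_descent :
  [/\ is_path O (pcat down suff), ptgt (pcat down suff) = ptgt rho
    & tail_zero_count (pcat down suff) <= 1].
Proof.
case: nd => [[arc_rho _ _] [_ _ _ path_down path_suff] [_ src_up src_cap src_down src_suff] _].
rewrite is_path_pcat // path_down path_suff normal_decomp_pcat !ptgt_pcat //; split=> //.
apply: (arc_pcat_tail_zero_count_r (p1 := pcat pref (pcat up cap))).
- by rewrite !ptgt_pcat.
- by rewrite !pcatA -normal_decomp_pcat.
Qed.

End NormalArc.

Section Shortcut.
Variables (sp sm : {set Q} -> seq (trans Q)) (S T : {set Q}).
Hypotheses (cyc_S : is_cycle O (sp S)) (simple_S : simple (sp S)) (eff_S : (0 < eff (sp S))%R).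
Hypotheses (cyc_T : is_cycle O (sm T)) (simple_T : simple (sm T)) (eff_T : (eff (sm T) < 0)%R).
Variables (ri prefi upi capi downi suffi : opath Q) (ai bi : nat).
Variables (rj prefj upj capj downj suffj : opath Q) (aj bj : nat).
Hypothesis nd_i : normal_decomp O sp sm S T ri prefi upi capi downi suffi ai bi.
Hypothesis nd_j : normal_decomp O sp sm S T rj prefj upj capj downj suffj aj bj.
Hypotheses (upi_high : #|Q| < (ptgt upi).2) (upj_pos : 0 < (ptgt upj).2).
Hypothesis downj_high : #|Q| < (psrc downj).2.

Lemma normal_arcs_shortcut :
  (ptgt upi).2 = (ptgt upj).2 %[mod gcdn `|eff (sp S)| `|eff (sm T)|] ->
  exists2 N, is_path O N &
    [/\ psrc N = psrc ri, ptgt N = ptgt rj & tail_zero_count N <= 1].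
Proof.
set A := `|eff (sp S)|; set B := `|eff (sm T)|.
have effA : (eff (sp S) = A%:Z)%R by rewrite /A; lia.
have effB : eff (sm T) = (- B%:Z)%R by rewrite /B; lia.
move=> /(@mod_gcdn_lincomb A B) [||x [y heights]]; try lia.
have [path_U tgt_U zeros_U] := normal_arc_ascent nd_i (leq_ltn_trans (leq0n _) upi_high).
have [path_C pos_C zeros_C] := normal_arc_cap nd_j upj_pos (leq_ltn_trans (leq0n _) downj_high).
have [path_D tgt_D zeros_D] := normal_arc_descent nd_j.
case: nd_i => _ _ [src_prefi _ src_capi _ _] [_ _ _ [base_S _]].
case: nd_j => _ _ [_ _ src_capj src_downj _] [_ _ _ [base_S' base_T]].
have src_U : psrc (pcat prefi upi) = psrc ri by [].
have src_D : psrc (pcat downj suffj) = psrc downj by [].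
(* Hide the pieces of the two arcs so that the [pcat] lemmas below stop at them. *)
move: (pcat prefi upi) (pcat downj suffj) src_U src_D path_U tgt_U zeros_U path_D tgt_D zeros_D.
move=> U D src_U src_D path_U tgt_U zeros_U path_D tgt_D zeros_D.
have capj_base : (psrc capj).1 = (psrc capi).1 by move: base_S'; rewrite base_S => -[].
set X := Opath ((psrc capi).1, (ptgt upi).2) (pow_seq (sp S) x).
have [|path_X tgt_X zeros_X] := pump_cycle (x := x) cyc_S base_S simple_S upi_high.
  by rewrite effA; lia.
set C := pshift (y * B) capj.
have [path_C' tgt_C zeros_C'] := pshift_path (y * B) path_C pos_C zeros_C.
set Y := Opath ((ptgt capj).1, (psrc downj).2 + y * B) (pow_seq (sm T) y).
have [||path_Y tgt_Y zeros_Y] := pump_cycle (x := y) (h := (psrc downj).2 + y * B) cyc_T base_T simple_T.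
- lia.
- by rewrite effB; nia.
have UX : psrc X = ptgt U by rewrite tgt_U /X /= -src_capi; case: (psrc capi).
have XC : psrc C = ptgt X.
  by rewrite tgt_X /= /shift capj_base src_capj effA; congr pair; lia.
have CY : psrc Y = ptgt C by rewrite tgt_C /Y /shift /= src_downj.
have YD : psrc D = ptgt Y.
  by rewrite src_D tgt_Y effB /= src_downj; case: (ptgt capj) => q d /=; congr pair; lia.
exists (pcat U (pcat X (pcat C (pcat Y D)))).
  by rewrite !is_path_pcat // path_U path_X path_C' path_Y.
rewrite !ptgt_pcat // !tail_zero_count_pcat // zeros_U zeros_X zeros_C' zeros_Y.
by split.
Qed.

End Shortcut.

Lemma pcat_replace P M N R :
  psrc M = ptgt P -> psrc R = ptgt M -> psrc N = psrc M -> ptgt N = ptgt M ->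
  is_path O (pcat P (pcat M R)) -> is_path O N ->
  [/\ is_path O (pcat P (pcat N R)), ptgt (pcat P (pcat N R)) = ptgt (pcat P (pcat M R))
    & zero_count (pcat P (pcat N R)) + tail_zero_count M =
      zero_count (pcat P (pcat M R)) + tail_zero_count N].
Proof.
move=> PM MR srcN tgtN; have PN : psrc N = ptgt P by rewrite srcN.
have NR : psrc R = ptgt N by rewrite tgtN.
rewrite !is_path_pcat ?ptgt_pcat // => /and3P[-> _ ->] ->; split=> //.
by rewrite !zero_countE /= !tail_zero_count_pcat ?ptgt_pcat //; lia.
Qed.

Section Blocks.
Variables (k : nat) (rn : nat -> opath Q).
Hypothesis rn_linked : forall m, m.+1 < k -> psrc (rn m.+1) = ptgt (rn m).

Definition block (g : config Q) (m n : nat) : opath Q :=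
  Opath g (flatten [seq ptr (rn l) | l <- iota m n]).

Lemma block_add g g' m n1 n2 :
  block g m (n1 + n2) = pcat (block g m n1) (block g' (m + n1) n2).
Proof. by rewrite /block /pcat /= iotaD map_cat flatten_cat. Qed.

Lemma block1 m : block (psrc (rn m)) m 1 = rn m.
Proof. by rewrite /block /= cats0; case: (rn m). Qed.

Lemma ptgt_block m n : m + n < k -> ptgt (block (psrc (rn m)) m n) = psrc (rn (m + n)).
Proof.
elim: n m => [|n IH] m lt_mn_k; first by rewrite addn0.
rewrite -add1n (block_add _ (psrc (rn m.+1))) block1 ptgt_pcat; last by apply: rn_linked; lia.
by rewrite addn1 IH; [congr (psrc (rn _)); lia | lia].
Qed.

Lemma block_shortcut g i j N :
  i < j < k -> psrc (rn 0) = g -> (forall m, m < k -> is_arc O (rn m)) ->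
  is_path O (block g 0 k) -> is_path O N ->
  psrc N = psrc (rn i) -> ptgt N = ptgt (rn j) -> tail_zero_count N <= 1 ->
  exists2 p, is_path O p &
    [/\ psrc p = g, ptgt p = ptgt (block g 0 k) & zero_count p < zero_count (block g 0 k)].
Proof.
case/andP=> lt_ij lt_jk src0 arcs path_all path_N srcN tgt_N zeros_N.
set mid := block (ptgt (rn i)) i.+1 (j - i.+1).
set M := pcat (rn i) (pcat mid (rn j)).
set R := block (ptgt (rn j)) j.+1 (k - j.+1).
have split_all : block g 0 k = pcat (block g 0 i) (pcat M R).
  rewrite /M /R /mid /block /pcat /=; congr Opath.
  rewrite {1}(_ : k = i + (1 + (j - i.+1 + (1 + (k - j.+1))))); last lia.
  by rewrite !iotaD !map_cat !flatten_cat /= !cats0 -!catA add0n addn1 subnKC // addn1.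
have tgt_P : ptgt (block g 0 i) = psrc (rn i) by rewrite -src0 ptgt_block //; lia.
have tgt_mid : ptgt mid = psrc (rn j).
  by rewrite /mid -rn_linked ?ptgt_block ?subnKC //; lia.
have tgt_M : ptgt M = ptgt (rn j) by rewrite !ptgt_pcat.
have zeros_M : 1 < tail_zero_count M.
  rewrite tail_zero_count_pcat // tail_zero_count_pcat ?tgt_mid //.
  have arc_i := arcs _ (ltn_trans lt_ij lt_jk); have arc_j := arcs _ lt_jk.
  by rewrite (tail_zero_count_arc arc_i) (tail_zero_count_arc arc_j); lia.
rewrite split_all in path_all *.
have MR : psrc R = ptgt M by rewrite tgt_M.
have tgt_NM : ptgt N = ptgt M by rewrite tgt_M.
have [path_new tgt_new zeros_new] := pcat_replace (M := M) (esym tgt_P) MR srcN tgt_NM path_all path_N.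
exists (pcat (block g 0 i) (pcat N R)) => //; split=> //; lia.
Qed.

End Blocks.

Lemma bridge_tail_zero_count (alpha beta : config Q) k (r : 'I_k -> opath Q) :
  chain alpha beta r ->
  is_path O (concat_path alpha r) /\ ptgt (concat_path alpha r) = beta ->
  (forall p, is_path O p -> psrc p = alpha -> ptgt p = beta ->
     zero_count (concat_path alpha r) <= zero_count p) ->
  (forall i, is_arc O (r i)) ->
  forall (i j : 'I_k) N, i < j -> is_path O N ->
    psrc N = psrc (r i) -> ptgt N = ptgt (r j) -> 1 < tail_zero_count N.
Proof.
case=> _ src_r0 _ linked [path_all tgt_all] minimal arcs i j N lt_ij path_N src_N tgt_N.
set rn := fun m => odflt (Opath alpha [::]) (omap r (insub m)).
have rnE (l : 'I_k) : rn l = r l by rewrite /rn valK.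
have rn_ord m (lt_mk : m < k) : rn m = r (Ordinal lt_mk) by rewrite -rnE.
have concatE : concat_path alpha r = block rn alpha 0 k.
  rewrite /concat_path /block -val_enum_ord -map_comp; congr (Opath _ (flatten _)).
  by apply: eq_map => l /=; rewrite rnE.
have rn_linked m : m.+1 < k -> psrc (rn m.+1) = ptgt (rn m).
  by move=> lt_mk; rewrite (rn_ord _ lt_mk) (rn_ord m (ltnW lt_mk)); apply: linked.
have src_rn0 : psrc (rn 0) = alpha by rewrite (rn_ord 0 (leq_ltn_trans (leq0n i) (ltn_ord i))) src_r0.
have rn_arcs m : m < k -> is_arc O (rn m) by move=> lt_mk; rewrite rn_ord.
rewrite ltnNge; apply/negP => zeros_N.
rewrite -!rnE in src_N tgt_N.
have [||p path_p [src_p tgt_p fewer]] := block_shortcut rn_linked _ src_rn0 rn_arcs _ path_N src_N tgt_N zeros_N.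
- by rewrite lt_ij ltn_ord.
- by rewrite -concatE.
have := minimal p path_p src_p; rewrite tgt_p -concatE => /(_ tgt_all); rewrite concatE; lia.
Qed.

End OneCounterPaths.

Theorem lemma5 (Q : finType) (O : OCS Q)
  (sp sm : {set Q} -> seq (trans Q))
  (Hsp : forall S, is_SCC O S -> pos_enabled O S ->
           [/\ is_cycle O (sp S), simple (sp S), contained_in S (sp S) & (0 < eff (sp S))%R])
  (Hsm : forall T, is_SCC O T -> neg_enabled O T ->
           [/\ is_cycle O (sm T), simple (sm T), contained_in T (sm T) & (eff (sm T) < 0)%R])
  (alpha beta : config Q) (Ha : alpha.2 = 0%N) (Hb : beta.2 = 0%N)
  (k : nat) (r : 'I_k -> opath Q)
  (Hchain : chain alpha beta r)
  (Hrho : is_path O (concat_path alpha r) /\ ptgt (concat_path alpha r) = beta)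
  (Hmin : forall p, is_path O p -> psrc p = alpha -> ptgt p = beta ->
            (zero_count (concat_path alpha r) <= zero_count p)%N)
  (Harc : forall i, is_arc O (r i))
  (Nset : {set 'I_k})
  (HL : forall i, i \notin Nset -> low_min_arc O (r i))
  (Sf Tf : 'I_k -> {set Q}) (pref up cap down suff : 'I_k -> opath Q) (a b : 'I_k -> nat)
  (HN : forall i, i \in Nset ->
          [/\ is_SCC O (Sf i), is_SCC O (Tf i),
              normal_decomp O sp sm (Sf i) (Tf i) (r i)
                (pref i) (up i) (cap i) (down i) (suff i) (a i) (b i) &
              good_decomp O sp sm (Sf i) (Tf i)
                (pref i) (up i) (cap i) (down i) (suff i) (a i) (b i)]) :
  forall S T : {set Q}, is_SCC O S -> is_SCC O T ->
    [set i in Nset | (Sf i == S) && (Tf i == T)] != set0 ->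
    (#|[set i in Nset | (Sf i == S) && (Tf i == T)]|
       <= gcdn (absz (eff (sp S))) (absz (eff (sm T))))%N.
Proof.
move=> S T scc_S scc_T nonempty; set NST := [set i in Nset | _].
have [i0] := set0Pn _ nonempty; rewrite inE => /andP[i0_N /andP[/eqP S_i0 /eqP T_i0]].
have [_ _ [[_ pos_S neg_T] _ _ _] _] := HN i0 i0_N.
rewrite S_i0 in pos_S; rewrite T_i0 in neg_T.
have [cyc_S simple_S _ eff_S] := Hsp S scc_S pos_S.
have [cyc_T simple_T _ eff_T] := Hsm T scc_T neg_T.
have g_gt0 : 0 < gcdn `|eff (sp S)| `|eff (sm T)| by rewrite gcdn_gt0 absz_gt0 gt_eqF.
pose height i := (ptgt (up i)).2.
have separated i j : i \in NST -> j \in NST -> i < j ->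
    height i != height j %[mod gcdn `|eff (sp S)| `|eff (sm T)|].
  rewrite !inE => /andP[i_N /andP[/eqP S_i /eqP T_i]] /andP[j_N /andP[/eqP S_j /eqP T_j]] lt_ij.
  have [_ _ nd_i [_ _ _ [high_i _] _]] := HN i i_N.
  have [_ _ nd_j [_ _ _ [high_j low_j] _]] := HN j j_N.
  rewrite S_i T_i in nd_i; rewrite S_j T_j in nd_j.
  apply/eqP => /(normal_arcs_shortcut cyc_S simple_S eff_S cyc_T simple_T eff_T nd_i nd_j high_i
    (leq_ltn_trans (leq0n _) high_j) low_j) [N path_N [src_N tgt_N zeros_N]].
  have := bridge_tail_zero_count Hchain Hrho Hmin Harc lt_ij path_N src_N tgt_N; lia.
suff inj : {in NST &, injective (fun i => Ordinal (ltn_pmod (height i) g_gt0))}.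
  by rewrite -(card_in_imset inj) (leq_trans (max_card _)) ?card_ord.
move=> i j i_N j_N /(congr1 val) /= /eqP eq_ij; apply/val_inj/eqP.
case: ltngtP => // [lt_ij|lt_ji].
- by have := separated i j i_N j_N lt_ij; rewrite eq_ij.
- by have := separated j i j_N i_N lt_ji; rewrite eq_sym eq_ij.
Qed.
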